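(* For all $n\ge1$, $a_{\{0101,0102\}}(n)=a_{\{0101,0121\}}(n)=F_{2n-1}$, where $F_1=F_2=1$ and $F_k=F_{k-1}+F_{k-2}$ for $k\ge3$ are the Fibonacci numbers.
   Context: An ascent in an integer sequence $s_1\cdots s_m$ is an index $j$ with $s_j<s_{j+1}$; $\mathrm{asc}$ denotes the number of ascents. An ascent sequence is a sequence $x_1\cdots x_n$ of nonnegative integers with $x_1=0$ and $x_i\le 1+\mathrm{asc}(x_1\cdots x_{i-1})$ for all $i\ge2$. The reduction $\mathrm{red}(w)$ of an integer sequence $w$ replaces the $i$-th smallest distinct letter of $w$ by $i-1$; a pattern is a reduced sequence. A sequence $x$ contains a pattern $p=p_1\cdots p_k$ if there are indices $i_1<\cdots<i_k$ with $\mathrm{red}(x_{i_1}\cdots x_{i_k})=p$; otherwise $x$ avoids $p$. For a finite set $P$ of patterns, $a_P(n)$ denotes the number of ascent sequences of length $n$ avoiding every pattern in $P$. *)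

From mathcomp Require Import all_boot.
Set Implicit Arguments. Unset Strict Implicit. Unset Printing Implicit Defensive.

Fixpoint asc (s : seq nat) : nat :=
  match s with
  | a :: ((b :: _) as t) => (a < b) + asc t
  | _ => 0
  end.

Definition is_ascent_seq (x : seq nat) : bool :=
  (head 1 x == 0) &&
  all (fun i => nth 0 x i <= (asc (take i x)).+1) (iota 1 (size x).-1).

Definition red (w : seq nat) : seq nat :=
  map (fun a => index a (sort leq (undup w))) w.

Definition contains (x p : seq nat) : Prop :=
  exists m : bitseq, size m = size x /\ red (mask m x) = p.

Definition avoids_all (P : seq (seq nat)) (x : seq nat) : Prop :=
  forall p, p \in P -> ~ contains x p.

(* a_P(n) = N  :  the set of ascent sequences of length n avoiding all of P
   is finite with exactly N elements (enumerated by a duplicate-free list). *)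
Definition count_avoiders (P : seq (seq nat)) (n N : nat) : Prop :=
  exists s : seq (seq nat), uniq s /\ size s = N /\
    forall x, x \in s <-> [/\ size x = n, is_ascent_seq x & avoids_all P x].

Fixpoint fib (k : nat) : nat :=
  match k with
  | 0 => 0
  | 1 => 1
  | (j.+1 as k').+1 => fib k' + fib j
  end.

From mathcomp Require Import all_boot zify.
Set Implicit Arguments. Unset Strict Implicit. Unset Printing Implicit Defensive.

(* Each pattern pair amounts to forbidding a configuration of four letters: a b a d with
   a < b <= d for {0101, 0102}, and a b c b with a < b and c = a or c > b for {0101, 0121}.
   Which letters may be appended to an avoider therefore depends only on a small state,
   tracked by a deterministic automaton, and this yields recursive enumerations.
   For {0101, 0102}, an avoider of length n + 2 is 0 followed by an avoider of length n + 1,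
   or it begins with 0 1; those are the avoiders of length n + 1 beginning with 0 1 extended
   by a final 0, and 0 followed by an avoider of length n + 1 with every letter raised by one.
   For {0101, 0121}, the letters that may follow an avoider x are 0, asc x + 1, and the last
   letter of x when it is nonzero.  In both cases the number a_n of avoiders of length n + 1
   and an auxiliary count w_n (avoiders beginning with 0 1, resp. ending with a nonzero
   letter) satisfy a_(n+1) = 2 a_n + w_n and w_(n+1) = a_n + w_n, whence a_n = F_(2n+1). *)

(** * Reduction and patterns of length four *)

Lemma containsP x p : contains x p <-> exists2 t, subseq t x & red t = p.
Proof.
split=> [[m [_ <-]]|[t /subseqP [m sm ->] <-]]; last by exists m.
by exists (mask m x); first exact: mask_subseq.
Qed.

Definition letters (t : seq nat) := sort leq (undup t).

Lemma redE t : red t = map (index^~ (letters t)) t.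
Proof. by []. Qed.

Lemma letters_sorted t : sorted ltn (letters t).
Proof.
by rewrite ltn_sorted_uniq_leq sort_uniq undup_uniq (sort_sorted leq_total).
Qed.

Lemma mem_letters t : letters t =i t.
Proof. by move=> z; rewrite mem_sort mem_undup. Qed.

Lemma map_nth_red t : map (nth 0 (letters t)) (red t) = t.
Proof.
rewrite redE -map_comp map_id_in // => z zt /=.
by rewrite nth_index // mem_letters.
Qed.

Lemma red_lt_size t i : i \in red t -> i < size (letters t).
Proof. by case/mapP=> z zt ->; rewrite index_mem mem_letters. Qed.

Lemma letters_lt t i j : i < j -> j \in red t ->
  nth 0 (letters t) i < nth 0 (letters t) j.
Proof.
move=> ij /red_lt_size jt.
by apply: (sorted_ltn_nth ltn_trans 0 (letters_sorted t)); rewrite ?inE ?(ltn_trans ij jt).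
Qed.

Lemma red_map_nth (r p : seq nat) : sorted ltn r ->
  (forall i, (i \in p) = (i < size r)) -> red (map (nth 0 r) p) = p.
Proof.
move=> sr pr; have ur : uniq r := sorted_uniq ltn_trans ltnn sr.
rewrite redE; have -> : letters (map (nth 0 r) p) = r.
  apply: (irr_sorted_eq ltn_trans ltnn (letters_sorted _) sr) => z.
  rewrite mem_letters; apply/mapP/idP => [[i + ->]|zr].
    by rewrite pr => /mem_nth->.
  by exists (index z r); rewrite ?nth_index // pr index_mem.
rewrite -map_comp map_id_in // => i /= ip.
by rewrite index_uniq // -pr.
Qed.

Definition occurs4 (Q : nat -> nat -> nat -> nat -> bool) (x : seq nat) :=
  exists a b c d, subseq [:: a; b; c; d] x /\ Q a b c d.

Lemma avoids_allE (P : seq (seq nat)) (Q : nat -> nat -> nat -> nat -> bool) x :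
  (forall t, red t \in P <-> exists a b c d, t = [:: a; b; c; d] /\ Q a b c d) ->
  avoids_all P x <-> ~ occurs4 Q x.
Proof.
move=> PQ; split=> [avP [a [b [c [d [sx q]]]]]|nQ p pP /containsP [t tx tp]].
  have /PQ Pt : exists a' b' c' d', [:: a; b; c; d] = [:: a'; b'; c'; d'] /\ Q a' b' c' d'.
    by exists a, b, c, d.
  by apply: (avP _ Pt); apply/containsP; exists [:: a; b; c; d].
move: pP; rewrite -tp => /PQ [a [b [c [d [et q]]]]].
by apply: nQ; exists a, b, c, d; rewrite -et.
Qed.

Definition QA a b c d := [&& a == c, a < b & b <= d].
Definition QB a b c d := [&& a < b, d == b & (c == a) || (b < c)].

Lemma red_patternsA t : red t \in [:: [:: 0; 1; 0; 1]; [:: 0; 1; 0; 2]] <->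
  exists a b c d, t = [:: a; b; c; d] /\ QA a b c d.
Proof.
split=> [|[a [b [c [d [-> /and3P [/eqP <- ab]]]]]]].
- rewrite -{2}(map_nth_red t) !inE => /orP [] /eqP e; rewrite e;
    do 4 eexists; (split; [reflexivity|]).
    by rewrite /QA eqxx leqnn letters_lt // e.
  by rewrite /QA eqxx letters_lt ?e // ltnW // letters_lt // e.
- rewrite leq_eqVlt => /predU1P [<- | bd].
    have -> : [:: a; b; a; b] = map (nth 0 [:: a; b]) [:: 0; 1; 0; 1] by [].
    by rewrite red_map_nth /= ?ab // => -[|[|i]].
  have -> : [:: a; b; a; d] = map (nth 0 [:: a; b; d]) [:: 0; 1; 0; 2] by [].
  by rewrite red_map_nth /= ?ab ?bd ?inE // => -[|[|[|i]]].
Qed.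

Lemma red_patternsB t : red t \in [:: [:: 0; 1; 0; 1]; [:: 0; 1; 2; 1]] <->
  exists a b c d, t = [:: a; b; c; d] /\ QB a b c d.
Proof.
split=> [|[a [b [c [d [-> /and3P [ab /eqP -> /orP [/eqP ->|bc]]]]]]]].
- rewrite -{2}(map_nth_red t) !inE => /orP [] /eqP e; rewrite e;
    do 4 eexists; (split; [reflexivity|]).
    by rewrite /QB !eqxx letters_lt // e.
  by rewrite /QB eqxx letters_lt ?e // letters_lt ?orbT // e.
- have -> : [:: a; b; a; b] = map (nth 0 [:: a; b]) [:: 0; 1; 0; 1] by [].
  by rewrite red_map_nth /= ?ab // => -[|[|i]].
- have -> : [:: a; b; c; b] = map (nth 0 [:: a; b; c]) [:: 0; 1; 2; 1] by [].
  by rewrite red_map_nth /= ?ab ?bc ?inE // => -[|[|[|i]]].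
Qed.

Lemma subseq_rcons2 (T : eqType) (s t : seq T) a b :
  subseq (rcons s a) (rcons t b) = subseq (rcons s a) t || (a == b) && subseq s t.
Proof.
rewrite -subseq_rev !rev_rcons -[subseq (rcons s a) t]subseq_rev rev_rcons.
rewrite -[subseq s t]subseq_rev /=; case: eqP => _; last by rewrite orbF.
by rewrite andTb orbC; apply/esym/orb_idr/cons_subseq.
Qed.

Lemma subseq_rconsr (T : eqType) (s x : seq T) v : subseq s x -> subseq s (rcons x v).
Proof. by move/subseq_trans; apply; apply: subseq_rcons. Qed.

Lemma mem_subseq2l (T : eqType) (a b : T) x : subseq [:: a; b] x -> a \in x.
Proof. by move/mem_subseq; apply; rewrite !inE eqxx. Qed.

Lemma mem_subseq2r (T : eqType) (a b : T) x : subseq [:: a; b] x -> b \in x.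
Proof. by move/mem_subseq; apply; rewrite !inE eqxx orbT. Qed.

Lemma last_in (x : seq nat) : x != [::] -> last 0 x \in x.
Proof. by case: x => // z y _; apply: mem_last. Qed.

Lemma subseq2_rconsE (a b v : nat) x :
  subseq [:: a; b] (rcons x v) = subseq [:: a; b] x || (b == v) && (a \in x).
Proof. by rewrite -[[:: a; b]]/(rcons [:: a] b) subseq_rcons2 sub1seq. Qed.

Definition completes (Q : nat -> nat -> nat -> nat -> bool) x v :=
  exists a b c, subseq [:: a; b; c] x /\ Q a b c v.

Lemma occurs4_rcons Q x v : occurs4 Q (rcons x v) <-> occurs4 Q x \/ completes Q x v.
Proof.
split=> [[a [b [c [d []]]]]|[[a [b [c [d [sx q]]]]]|[a [b [c [sx q]]]]]].
- rewrite (subseq_rcons2 [:: a; b; c]) => /orP [sx|/andP [/eqP <- sx]] q.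
    by left; exists a, b, c, d.
  by right; exists a, b, c.
- by exists a, b, c, d; split=> //; apply: subseq_rconsr.
- exists a, b, c, v; split=> //.
  by rewrite -[[:: a; b; c; v]]/(rcons [:: a; b; c] v) subseq_rcons2 eqxx sx orbT.
Qed.

Lemma completes_rcons Q x v w : completes Q (rcons x v) w <->
  completes Q x w \/ exists a b, subseq [:: a; b] x /\ Q a b v w.
Proof.
split=> [[a [b [c []]]]|[[a [b [c [sx q]]]]|[a [b [sx q]]]]].
- rewrite (subseq_rcons2 [:: a; b]) => /orP [sx|/andP [/eqP <- sx]] q.
    by left; exists a, b, c.
  by right; exists a, b.
- by exists a, b, c; split=> //; apply: subseq_rconsr.
- exists a, b, v; split=> //.
  by rewrite -[[:: a; b; v]]/(rcons [:: a; b] v) subseq_rcons2 eqxx sx orbT.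
Qed.

Lemma completes_rconsr Q x v w : completes Q x w -> completes Q (rcons x v) w.
Proof. by move=> C; apply/completes_rcons; left. Qed.

Lemma completes_rcons_new (Q : nat -> nat -> nat -> nat -> bool) a b x v w :
  subseq [:: a; b] x -> Q a b v w -> completes Q (rcons x v) w.
Proof. by move=> ab q; apply/completes_rcons; right; exists a, b. Qed.

Lemma asc_rcons x v : x != [::] -> asc (rcons x v) = asc x + (last 0 x < v).
Proof.
case: x => [|z y] // _; elim: y z => [|w y IH] z; first by rewrite /= addn0.
by transitivity ((z < w) + asc (rcons (w :: y) v)); rewrite // IH addnA.
Qed.

Lemma is_ascent_seq_rcons x v : x != [::] ->
  is_ascent_seq (rcons x v) = is_ascent_seq x && (v <= (asc x).+1).
Proof.
rewrite -size_eq0 -lt0n => sx.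
rewrite /is_ascent_seq size_rcons -pred_Sn -andbA.
have -> : head 1 (rcons x v) = head 1 x by case: x sx.
congr (_ && _).
have {1}-> : size x = (size x).-1 + 1 by rewrite addn1 prednK.
rewrite iotaD all_cat /= andbT add1n prednK //.
congr (_ && _).
- apply: eq_in_all => i; rewrite mem_iota add1n prednK // => /andP [_ ix].
  by rewrite -cats1 nth_cat ix take_cat ix.
- by rewrite -cats1 nth_cat ltnn subnn /= take_cat ltnn subnn take0 cats0.
Qed.

Definition avoider Q x := is_ascent_seq x /\ ~ occurs4 Q x.

Definition good_letter Q x v := v <= (asc x).+1 /\ ~ completes Q x v.

Lemma avoider_rcons Q x v : x != [::] ->
  avoider Q (rcons x v) <-> avoider Q x /\ good_letter Q x v.
Proof.
move=> x0; rewrite /avoider is_ascent_seq_rcons // occurs4_rcons.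
split=> [[/andP [ax vx] nQ]|[[ax nQ] [vx nC]]].
  by split; split=> // oc; apply: nQ; [left|right].
by rewrite ax vx; split=> // [[]].
Qed.

Lemma avoider_head Q x : avoider Q x -> exists y, x = 0 :: y.
Proof. by case: x => [|[|k] y] [] //; exists y. Qed.

Lemma avoider0 Q : avoider Q [:: 0].
Proof. by split=> // [[a [b [c [d [/size_subseq]]]]]]. Qed.

Lemma avoider_second Q v y : avoider Q [:: 0, v & y] -> v <= 1.
Proof. by case=> /andP [_ /allP /(_ 1)]; rewrite mem_iota /= => /(_ isT). Qed.

(** * Recognizing avoiders letter by letter *)

Section Recognizer.

Variables (S : Type) (step : S -> nat -> option S) (s0 : S).

Fixpoint run (s : S) (y : seq nat) : option S :=
  if y is v :: y' then obind (run^~ y') (step s v) else Some s.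

Lemma run_rcons s y v : run s (rcons y v) = obind (step^~ v) (run s y).
Proof. by elim: y s => [|w y IH] s /=; case: (step s _). Qed.

Definition state_of (x : seq nat) : option S :=
  if x is 0 :: y then run s0 y else None.

Variables (Q : nat -> nat -> nat -> nat -> bool) (Inv : S -> seq nat -> Prop).

Hypothesis Inv0 : Inv s0 [:: 0].
Hypothesis step_good : forall s x v, x != [::] -> Inv s x ->
  good_letter Q x v <-> isSome (step s v).
Hypothesis step_inv : forall s s' x v, x != [::] -> Inv s x ->
  step s v = Some s' -> Inv s' (rcons x v).

Lemma state_ofP x :
  if state_of x is Some s then Inv s x /\ avoider Q x else ~ avoider Q x.
Proof.
elim/last_ind: x => [|x v IH]; first by case.
have [-> | x0] := eqVneq x [::].
  by case: v => [|k] /=; [split; [exact: Inv0 | exact: avoider0] | case].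
have -> : state_of (rcons x v) = obind (step^~ v) (state_of x).
  by case: x x0 {IH} => [|[|k] y] //= _; rewrite run_rcons.
have avr := avoider_rcons Q v x0.
case: (state_of x) IH => [s [Is ax]|nax] /=; last by move/avr=> [].
have := step_good v x0 Is; case E : (step s v) => [s'|] good.
  by split; [exact: step_inv E | apply/avr; split=> //; apply/good].
by move/avr=> [_ /good].
Qed.

Lemma state_of_avoider x : isSome (state_of x) <-> avoider Q x.
Proof. by have := state_ofP x; case: (state_of x) => [s [] | ]. Qed.

Lemma avoider_inv x : avoider Q x -> exists s, Inv s x.
Proof. by have := state_ofP x; case: (state_of x) => [s [Is _] _ | //]; exists s. Qed.

End Recognizer.

(** * The patterns 0101 and 0102 *)

Lemma completesA_rcons x v w : completes QA (rcons x v) w <->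
  completes QA x w \/ exists2 b, v < b <= w & subseq [:: v; b] x.
Proof.
rewrite completes_rcons.
split=> [[c|[a [b [sx /and3P [/eqP <- ab bw]]]]]|[c|[b /andP [vb bw] sx]]].
- by left.
- by right; exists b; rewrite ?ab.
- by left.
- by right; exists v, b; rewrite /QA eqxx vb.
Qed.

(* [Rising m]: the letters read so far are 0..0 1..1 ... m..m.  [Falling u]: a descent
   has occurred and the last letter is [u]; from then on the letters weakly decrease. *)
Inductive stateA := Rising of nat | Falling of nat.

Definition stepA (s : stateA) (v : nat) : option stateA :=
  match s with
  | Rising m => if v == m then Some (Rising m) else if v == m.+1 then Some (Rising m.+1)
                else if v < m then Some (Falling v) else None
  | Falling u => if v <= u then Some (Falling v) else None
  end.

Definition boundA (s : stateA) := match s with Rising m => m.+1 | Falling u => u end.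

Lemma stepA_isSome s v : isSome (stepA s v) = (v <= boundA s).
Proof.
case: s => [m|u] /=; last by case: leqP.
rewrite [v <= m.+1]leq_eqVlt ltnS [v <= m]leq_eqVlt.
by case: (v == m); case: (v == m.+1); case: (v < m).
Qed.

Definition invA (s : stateA) (x : seq nat) :=
  match s with
  | Rising m => [/\ asc x = m, last 0 x = m, {in x, forall z, z <= m},
                   forall w, w < m -> subseq [:: w; w.+1] x
                 & forall v, ~ completes QA x v]
  | Falling u => [/\ u <= asc x, forall w, w <= u -> subseq [:: w; w.+1] x
                 & forall v, completes QA x v <-> u < v]
  end.

Lemma invA0 : invA (Rising 0) [:: 0].
Proof.
split=> // [z | v [a [b [c [/size_subseq]]]]] //.
by rewrite inE => /eqP ->.
Qed.

Lemma good_letterA s x v : invA s x -> good_letter QA x v <-> isSome (stepA s v).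
Proof.
rewrite stepA_isSome /good_letter; case: s => [m [-> _ _ _ nC] | u [ux _ C]] /=.
  by split=> [[] | vm] //; split=> //; apply: nC.
split=> [[_ nCv] | vu]; first by rewrite leqNgt; apply/negP => /C.
split; first by rewrite (leq_trans vu) // (leq_trans ux).
by move/C; rewrite ltnNge vu.
Qed.

Lemma invA_rising_stay m x : x != [::] ->
  invA (Rising m) x -> invA (Rising m) (rcons x m).
Proof.
move=> x0 [ax lx mx wx nC]; split.
- by rewrite asc_rcons // lx ltnn addn0.
- by rewrite last_rcons.
- by move=> z; rewrite mem_rcons inE => /predU1P [-> | /mx].
- by move=> w /wx /subseq_rconsr.
- move=> v /completesA_rcons [/nC // | [b /andP [mb _] /mem_subseq2r /mx]].
  by rewrite leqNgt mb.
Qed.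

Lemma invA_rising_up m x : x != [::] ->
  invA (Rising m) x -> invA (Rising m.+1) (rcons x m.+1).
Proof.
move=> x0 [ax lx mx wx nC]; split.
- by rewrite asc_rcons // lx ltnSn addn1 ax.
- by rewrite last_rcons.
- by move=> z; rewrite mem_rcons inE => /predU1P [-> // | /mx /leqW].
- move=> w; rewrite ltnS leq_eqVlt => /predU1P [-> | /wx /subseq_rconsr //].
  by rewrite subseq2_rconsE eqxx -lx last_in ?orbT.
- move=> v /completesA_rcons [/nC // | [b /andP [mb _] /mem_subseq2r /mx]].
  by rewrite leqNgt ltnW.
Qed.

Lemma invA_rising_fall m v x : x != [::] -> v < m ->
  invA (Rising m) x -> invA (Falling v) (rcons x v).
Proof.
move=> x0 vm [ax _ _ wx nC]; split.
- by rewrite asc_rcons // ax (leq_trans (ltnW vm)) ?leq_addr.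
- by move=> w wv; apply/subseq_rconsr/wx/(leq_ltn_trans wv vm).
- move=> w; rewrite completesA_rcons.
  split=> [[/nC // | [b /andP [vb bw] _]] | vw]; first exact: leq_trans vb bw.
  by right; exists v.+1; rewrite ?ltnSn ?vw // wx.
Qed.

Lemma invA_falling u v x : x != [::] -> v <= u ->
  invA (Falling u) x -> invA (Falling v) (rcons x v).
Proof.
move=> x0 vu [ux wx C]; split.
- by rewrite asc_rcons // (leq_trans vu) ?(leq_trans ux) ?leq_addr.
- by move=> w wv; apply/subseq_rconsr/wx/(leq_trans wv vu).
- move=> w; rewrite completesA_rcons; split=> [[/C uw | [b /andP [vb bw] _]] | vw].
  + exact: leq_ltn_trans vu uw.
  + exact: leq_trans vb bw.
  + by right; exists v.+1; rewrite ?ltnSn ?vw // wx.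
Qed.

Lemma invA_step s s' x v : x != [::] -> invA s x ->
  stepA s v = Some s' -> invA s' (rcons x v).
Proof.
move=> x0; case: s => [m|u] /= I.
  case: eqP => [-> [<-] | _]; first exact: invA_rising_stay.
  case: eqP => [-> [<-] | _]; first exact: invA_rising_up.
  by case: ltnP => [vm [<-] | //]; exact: invA_rising_fall x0 vm I.
by case: leqP => [vu [<-] | //]; exact: invA_falling x0 vu I.
Qed.

Lemma avoiderA_state x : isSome (state_of stepA (Rising 0) x) <-> avoider QA x.
Proof. exact: (state_of_avoider invA0 (fun s x v _ => @good_letterA s x v) invA_step). Qed.

Lemma avoiderA_inv x : avoider QA x -> exists s, invA s x.
Proof. exact: (avoider_inv invA0 (fun s x v _ => @good_letterA s x v) invA_step). Qed.

Lemma avoiderA_cons0 y : avoider QA [:: 0, 0 & y] <-> avoider QA (0 :: y).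
Proof. by split=> /avoiderA_state ax; apply/avoiderA_state. Qed.

Definition shiftA s := match s with Rising m => Rising m.+1 | Falling u => Falling u.+1 end.

Lemma stepA_shift s v : stepA (shiftA s) v.+1 = omap shiftA (stepA s v).
Proof.
case: s => [m|u] /=; rewrite ?eqSS ?ltnS.
- by case: (v == m); case: (v == m.+1); case: (v < m).
- by case: (v <= u).
Qed.

Lemma runA_shift s y : run stepA (shiftA s) (map S y) = omap shiftA (run stepA s y).
Proof. by elim: y s => [|v y IH] s //=; rewrite stepA_shift; case: (stepA s v). Qed.

Lemma avoiderA_shift z : z != [::] -> avoider QA (0 :: map S z) <-> avoider QA z.
Proof.
move=> z0; suff E : isSome (state_of stepA (Rising 0) (0 :: map S z)) =
                    isSome (state_of stepA (Rising 0) z).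
  by split=> /avoiderA_state ax; apply/avoiderA_state; rewrite ?E // -E.
case: z z0 => [|[|k] y] //= _.
by rewrite (runA_shift (Rising 0)); case: run.
Qed.

Lemma runA_falling0 y s : run stepA (Falling 0) y = Some s -> last 0 y = 0.
Proof. by elim: y => [|[|v] y IH] //=. Qed.

Lemma runA_shift_zero s y s' : run stepA (shiftA s) y = Some s' -> 0 \in y -> last 0 y = 0.
Proof.
elim: y s => [|[|v] y IH] s //=.
  have -> : stepA (shiftA s) 0 = Some (Falling 0) by case: s.
  by move=> /runA_falling0.
rewrite stepA_shift; case: (stepA s v) => //= s1 run1; rewrite inE /= => y0.
by move: (IH s1 run1 y0); case: y y0 {IH run1}.
Qed.

Lemma avoiderA_zero_last y : avoider QA [:: 0, 1 & y] -> 0 \in y -> last 0 y = 0.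
Proof.
move/avoiderA_state => /=; case E : (run stepA (Rising 1) y) => [s|] // _.
exact: (runA_shift_zero (s := Rising 0) E).
Qed.

Lemma avoiderA_rcons0 x : avoider QA x -> avoider QA (rcons x 0).
Proof.
move=> ax; have [s Is] := avoiderA_inv ax.
have x0 : x != [::] by have [y ->] := avoider_head ax.
by apply/avoider_rcons => //; split=> //; apply/(good_letterA 0 Is); rewrite stepA_isSome.
Qed.

Definition sized_avoiderA n x := size x = n.+1 /\ avoider QA x.
Definition sized_avoiderA01 n x := [/\ size x = n.+1, avoider QA x & take 2 x = [:: 0; 1]].

Lemma map_succ_pred (y : seq nat) : 0 \notin y -> map S (map predn y) = y.
Proof.
move=> y0; rewrite -map_comp map_id_in // => z zy /=.
by rewrite prednK // lt0n; apply: contraNneq y0 => <-.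
Qed.

Definition extA (a w : seq (seq nat)) :=
  map (rcons^~ 0) w ++ map (fun z => 0 :: map S z) a.

Lemma mem_extA n a w :
  (forall x, x \in a <-> sized_avoiderA n x) -> (forall x, x \in w <-> sized_avoiderA01 n x) ->
  forall x, x \in extA a w <-> sized_avoiderA01 n.+1 x.
Proof.
move=> aP wP x; rewrite mem_cat; split.
  case/orP=> /mapP [x' + ->].
    case/wP=> sx ax tx; split; [by rewrite size_rcons sx | exact: avoiderA_rcons0 |].
    by case: (x') tx => [|p [|q x'']] //=; rewrite !take0.
  case/aP=> sx ax; have [y ey] := avoider_head ax.
  split; [by rewrite /= size_map sx | | by rewrite ey /= take0].
  by apply/avoiderA_shift; rewrite // -size_eq0 sx.
case=> sx ax; case: x sx ax => [|[|k] [|[|[|j]] y]] //= [sy] ax _.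
have [y0 | ny0] := boolP (0 \in y).
  have := avoiderA_zero_last ax y0.
  case/lastP: y sy ax y0 => [|y' v] // sy ax _; rewrite last_rcons => v0.
  apply/orP; left; apply/mapP; exists [:: 0, 1 & y']; last by rewrite v0.
  apply/wP; split; last by rewrite /= take0.
    by move: sy; rewrite size_rcons /= => ->.
  by move: ax; rewrite v0 -[[:: 0, 1 & _]]/(rcons [:: 0, 1 & y'] 0) => /avoider_rcons [].
apply/orP; right; apply/mapP; exists (0 :: map predn y).
  apply/aP; split; first by rewrite /= size_map sy.
  by apply/avoiderA_shift => //=; rewrite map_succ_pred.
by rewrite /= map_succ_pred.
Qed.

Fixpoint avoidersA n : seq (seq nat) * seq (seq nat) :=
  if n is n'.+1 then
    let: (a, w) := avoidersA n' in (map (cons 0) a ++ extA a w, extA a w)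
  else ([:: [:: 0]], [::]).

Lemma avoidersA_mem n :
  (forall x, x \in (avoidersA n).1 <-> sized_avoiderA n x) /\
  (forall x, x \in (avoidersA n).2 <-> sized_avoiderA01 n x).
Proof.
elim: n => [|n IH].
  split=> x /=.
  - rewrite inE; split=> [/eqP -> | []]; first by split=> //; apply: avoider0.
    by case: x => [|v [|w y]] // _ /avoider_head [y' [->]].
  - by split=> // -[]; case: x => [|v [|w y]].
rewrite /=; case: (avoidersA n) IH => a w /= [aP wP].
have eP := mem_extA aP wP; split=> // x; rewrite mem_cat.
split=> [/orP [/mapP [x' /aP [sx ax] ->] | /eP []] | [sx ax]].
- split; first by rewrite /= sx.
  by have [y ey] := avoider_head ax; rewrite ey; apply/avoiderA_cons0; rewrite -ey.
- by split.
case: x sx ax => [|[|k] [|v y]] // [sy] ax; last by case/avoider_head: ax => ? [].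
case: v ax => [|[|v]] ax; last by have := avoider_second ax.
  apply/orP; left; apply/mapP; exists (0 :: y) => //; apply/aP.
  by split; [rewrite /= sy | apply/avoiderA_cons0].
by apply/orP; right; apply/eP; split; rewrite /= ?sy ?take0.
Qed.

Lemma uniq_extA n a w : (forall x, x \in a <-> sized_avoiderA n x) ->
  uniq a -> uniq w -> uniq (extA a w).
Proof.
move=> aP ua uw; rewrite cat_uniq map_inj_uniq ?uw; last exact: rcons_injl.
rewrite map_inj_uniq ?ua ?andbT; last by move=> z1 z2 [] /(inj_map succn_inj).
apply/hasPn => _ /mapP [z /aP [sz _] ->]; apply/mapP => -[x _ /(congr1 (last 0))].
by rewrite last_rcons; case: z sz => // v z _ /=; rewrite (last_map S).
Qed.

Lemma avoidersA_uniq n : uniq (avoidersA n).1 /\ uniq (avoidersA n).2.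
Proof.
elim: n => [|n] //=; have [aP wP] := avoidersA_mem n.
case: (avoidersA n) aP wP => a w /= aP wP [ua uw].
have ue := uniq_extA aP ua uw; rewrite cat_uniq ue map_inj_uniq ?ua //; last by move=> ? ? [].
split=> //; rewrite andbT; apply/hasPn => x /(mem_extA aP wP) [_ _ tx].
apply/mapP => -[x' /aP [_ /avoider_head [y ey]] ex].
by move: tx; rewrite ex ey.
Qed.

Lemma fib_odd_even (a w : nat -> nat) : a 0 = 1 -> w 0 = 0 ->
  (forall n, a n.+1 = a n + a n + w n) -> (forall n, w n.+1 = a n + w n) ->
  forall n, a n = fib (2 * n).+1 /\ w n = fib (2 * n).
Proof.
move=> a0 w0 aS wS; elim=> [|n [IHa IHw]]; first by rewrite a0 w0.
rewrite aS wS IHa IHw mulnS !addSn add0n.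
have -> : fib (2 * n).+3 = fib (2 * n).+2 + fib (2 * n).+1 by [].
have -> : fib (2 * n).+2 = fib (2 * n).+1 + fib (2 * n) by [].
by split; lia.
Qed.

Lemma avoidersA_size n : size (avoidersA n).1 = fib (2 * n).+1.
Proof.
have [] // := @fib_odd_even (fun n => size (avoidersA n).1) (fun n => size (avoidersA n).2)
  erefl erefl _ _ n.
- by move=> m /=; case: (avoidersA m) => a w /=; rewrite !size_cat !size_map; lia.
- by move=> m /=; case: (avoidersA m) => a w /=; rewrite !size_cat !size_map; lia.
Qed.

(** * The patterns 0101 and 0121 *)

Lemma completesB0 x : ~ completes QB x 0.
Proof. by case=> a [b [c [_ /and3P [ab /eqP b0 _]]]]; rewrite -b0 in ab. Qed.

Lemma completesB_max M x v : {in x, forall z, z <= M} -> M < v -> ~ completes QB x v.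
Proof.
move=> xM Mv [a [b [c [sx /and3P [_ /eqP vb _]]]]].
have /xM : b \in x by apply: (mem_subseq sx); rewrite !inE eqxx orbT.
by rewrite -vb leqNgt Mv.
Qed.

(* [Zeros]: only zeros so far.  [AtTop l]: the last letter is the maximum [l].
   [AtZero M]: the last letter is 0 and the maximum is [M]. *)
Inductive stateB := Zeros | AtTop of nat | AtZero of nat.

Definition stepB (s : stateB) (v : nat) : option stateB :=
  match s with
  | Zeros => if v == 0 then Some Zeros else if v == 1 then Some (AtTop 1) else None
  | AtTop l => if v == 0 then Some (AtZero l) else if v == l then Some (AtTop l)
               else if v == l.+1 then Some (AtTop l.+1) else None
  | AtZero M => if v == 0 then Some (AtZero M)
                else if v == M.+1 then Some (AtTop M.+1) else None
  end.

Definition invB (s : stateB) (x : seq nat) :=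
  match s with
  | Zeros => asc x = 0 /\ {in x, forall z, z = 0}
  | AtTop l => [/\ asc x = l, last 0 x = l, {in x, forall z, z <= l}, subseq [:: 0; l] x
                & forall w, 0 < w < l -> completes QB x w]
               /\ forall c, c < l -> ~~ subseq [:: l; c] x
  | AtZero M => [/\ asc x = M, last 0 x = 0, {in x, forall z, z <= M}
                & forall w, 0 < w <= M -> completes QB x w]
  end.

Lemma invB0 : invB Zeros [:: 0].
Proof. by split=> // z; rewrite inE => /eqP. Qed.

Lemma invB_zeros x : x != [::] -> invB Zeros x -> invB Zeros (rcons x 0).
Proof.
move=> x0 [ax x_0]; split; first by rewrite asc_rcons // ax.
by move=> z; rewrite mem_rcons inE => /predU1P [| /x_0].
Qed.

Lemma invB_zeros_top x : x != [::] -> invB Zeros x -> invB (AtTop 1) (rcons x 1).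
Proof.
move=> x0 [ax x_0]; have lx : last 0 x = 0 by apply/x_0/last_in.
have x0in : 0 \in x by rewrite -{1}lx last_in.
split; first split=> //.
- by rewrite asc_rcons // ax lx.
- by rewrite last_rcons.
- by move=> z; rewrite mem_rcons inE => /predU1P [-> | /x_0 ->].
- by rewrite subseq2_rconsE eqxx x0in orbT.
- by move=> w /andP [w0 w1]; move: (leq_trans w0 w1).
move=> c; rewrite ltnS leqn0 => /eqP ->; rewrite subseq2_rconsE /=.
by rewrite orbF; apply/negP => /mem_subseq2l /x_0.
Qed.

Lemma invB_top_zero l x : x != [::] -> invB (AtTop l) x -> invB (AtZero l) (rcons x 0).
Proof.
move=> x0 [[ax lx xl s0l C] _]; split.
- by rewrite asc_rcons // ax ltn0 addn0.
- by rewrite last_rcons.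
- by move=> z; rewrite mem_rcons inE => /predU1P [-> | /xl].
move=> w /andP [w0]; rewrite leq_eqVlt => /predU1P [wl | wl].
  by rewrite wl in w0 *; apply: (completes_rcons_new s0l); rewrite /QB w0 eqxx.
by apply/completes_rconsr/C; rewrite w0.
Qed.

Lemma invB_top_stay l x : x != [::] -> invB (AtTop l) x -> invB (AtTop l) (rcons x l).
Proof.
move=> x0 [[ax lx xl s0l C] nl]; split; first split.
- by rewrite asc_rcons // lx ltnn addn0.
- by rewrite last_rcons.
- by move=> z; rewrite mem_rcons inE => /predU1P [-> | /xl].
- exact: subseq_rconsr.
- by move=> w /C /completes_rconsr.
by move=> c cl; rewrite subseq2_rconsE (ltn_eqF cl) andFb orbF nl.
Qed.

Lemma invB_top_up l x : x != [::] -> invB (AtTop l) x -> invB (AtTop l.+1) (rcons x l.+1).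
Proof.
move=> x0 [[ax lx xl s0l C] _]; split; first split.
- by rewrite asc_rcons // lx ltnSn addn1 ax.
- by rewrite last_rcons.
- by move=> z; rewrite mem_rcons inE => /predU1P [-> | /xl /leqW].
- by rewrite subseq2_rconsE eqxx (mem_subseq2l s0l) orbT.
- move=> w /andP [w0]; rewrite ltnS leq_eqVlt => /predU1P [wl | wl].
    by rewrite wl in w0 *; apply: (completes_rcons_new s0l); rewrite /QB w0 eqxx ltnSn orbT.
  by apply/completes_rconsr/C; rewrite w0.
move=> c cl; rewrite subseq2_rconsE (ltn_eqF cl) andFb orbF.
by apply/negP => /mem_subseq2l /xl; rewrite ltnn.
Qed.

Lemma invB_zero_stay M x : x != [::] -> invB (AtZero M) x -> invB (AtZero M) (rcons x 0).
Proof.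
move=> x0 [ax lx xM C]; split.
- by rewrite asc_rcons // ax ltn0 addn0.
- by rewrite last_rcons.
- by move=> z; rewrite mem_rcons inE => /predU1P [-> | /xM].
- by move=> w /C /completes_rconsr.
Qed.

Lemma invB_zero_top M x : x != [::] -> invB (AtZero M) x -> invB (AtTop M.+1) (rcons x M.+1).
Proof.
move=> x0 [ax lx xM C]; have x0in : 0 \in x by rewrite -{1}lx last_in.
split; first split.
- by rewrite asc_rcons // lx ax addn1.
- by rewrite last_rcons.
- by move=> z; rewrite mem_rcons inE => /predU1P [-> | /xM /leqW].
- by rewrite subseq2_rconsE eqxx x0in orbT.
- by move=> w; rewrite ltnS => /C /completes_rconsr.
move=> c cl; rewrite subseq2_rconsE (ltn_eqF cl) andFb orbF.
by apply/negP => /mem_subseq2l /xM; rewrite ltnn.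
Qed.

Lemma invB_step s s' x v : x != [::] -> invB s x ->
  stepB s v = Some s' -> invB s' (rcons x v).
Proof.
move=> x0; case: s => [|l|M] /= I.
- case: eqP => [-> [<-] | _]; first exact: invB_zeros.
  by case: eqP => [-> [<-] | //]; exact: invB_zeros_top.
- case: eqP => [-> [<-] | _]; first exact: invB_top_zero.
  case: eqP => [-> [<-] | _]; first exact: invB_top_stay.
  by case: eqP => [-> [<-] | //]; exact: invB_top_up.
- case: eqP => [-> [<-] | _]; first exact: invB_zero_stay.
  by case: eqP => [-> [<-] | //]; exact: invB_zero_top.
Qed.

Definition allowedB (s : stateB) :=
  match s with Zeros => [:: 0; 1] | AtTop l => [:: 0; l.+1; l] | AtZero M => [:: 0; M.+1] end.

Lemma stepB_isSome s v : isSome (stepB s v) = (v \in allowedB s).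
Proof.
case: s => [|l|M]; rewrite /= !inE; case: (v == 0) => //=.
- by case: (v == 1).
- by case: (v == l); case: (v == l.+1).
- by case: (v == M.+1).
Qed.

Lemma good_letterB_zeros x v : invB Zeros x -> good_letter QB x v <-> v \in [:: 0; 1].
Proof.
move=> [ax x_0]; have nC : ~ completes QB x v.
  case=> a [b [c [sx /and3P [ab _ _]]]].
  have /x_0 b0 : b \in x by apply: (mem_subseq sx); rewrite !inE eqxx orbT.
  by rewrite b0 in ab.
rewrite /good_letter ax !inE; split=> [[+ _] | v01]; first by case: v {nC} => [|[|v]].
by split=> //; case: v {nC} v01 => [|[|v]].
Qed.

Lemma good_letterB_top l x v :
  invB (AtTop l) x -> good_letter QB x v <-> v \in [:: 0; l.+1; l].
Proof.
move=> [[ax lx xl s0l C] nl]; rewrite /good_letter ax !inE.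
have nCl : ~ completes QB x l.
  case=> a [b [c [sx /and3P [ab /eqP lb /orP [/eqP ca | bc]]]]].
    by move: sx; rewrite ca -lb => /cons_subseq; apply/negP/nl; rewrite lb.
  have /xl : c \in x by apply: (mem_subseq sx); rewrite !inE eqxx !orbT.
  by rewrite leqNgt lb bc.
split=> [[vl nC] | /or3P [] /eqP ->].
- case: (posnP v) => [-> // | v0]; case: (ltngtP v l) => [vl' | lv | ->]; last by rewrite !orbT.
    by case: nC; apply: C; rewrite v0.
  by move: vl; rewrite leq_eqVlt ltnS leqNgt lv orbF => ->; rewrite orbT.
- by split=> //; apply: completesB0.
- by split; [rewrite leqnn | apply: completesB_max xl _].
- by split.
Qed.

Lemma good_letterB_zero M x v :
  invB (AtZero M) x -> good_letter QB x v <-> v \in [:: 0; M.+1].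
Proof.
move=> [ax lx xM C]; rewrite /good_letter ax !inE.
split=> [[vM nC] | /orP [] /eqP ->].
- case: (posnP v) => [-> // | v0]; move: vM; rewrite leq_eqVlt ltnS => /predU1P [-> | vM].
    by rewrite eqxx orbT.
  by case: nC; apply: C; rewrite v0.
- by split=> //; apply: completesB0.
- by split=> //; apply: completesB_max xM _.
Qed.

Lemma good_letterB s x v : invB s x -> good_letter QB x v <-> v \in allowedB s.
Proof.
case: s => [|l|M].
- exact: good_letterB_zeros.
- exact: good_letterB_top.
- exact: good_letterB_zero.
Qed.

Definition childrenB (x : seq nat) :=
  [:: 0, (asc x).+1 & if last 0 x is 0 then [::] else [:: last 0 x]].

Lemma childrenB_allowedB s x : x != [::] -> invB s x -> childrenB x =i allowedB s.
Proof.
move=> x0; case: s => [[ax x_0] | l [[ax lx _ _ _] _] | M [ax lx _ _]] z.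
all: rewrite /childrenB ax.
- by rewrite (x_0 _ (last_in x0)).
- by rewrite lx; case: l {ax lx} => [|l]; rewrite !inE //; case: (z == 0); rewrite ?orbF.
- by rewrite lx.
Qed.

Lemma avoiderB_inv x : avoider QB x -> exists s, invB s x.
Proof.
apply: (avoider_inv invB0 _ invB_step) => s x' v _ Is.
by rewrite stepB_isSome; apply: good_letterB.
Qed.

Lemma avoiderB_rcons x v : avoider QB x -> avoider QB (rcons x v) <-> v \in childrenB x.
Proof.
move=> ax; have [s Is] := avoiderB_inv ax.
have x0 : x != [::] by have [y ->] := avoider_head ax.
rewrite (childrenB_allowedB x0 Is) -(good_letterB _ Is).
by split=> [/avoider_rcons [] | good] //; apply/avoider_rcons.
Qed.

Lemma avoiderB_last x : avoider QB x -> last 0 x <= asc x.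
Proof.
case/avoiderB_inv=> [[|l|M]] => [[_ x_0] | [[-> -> _ _ _] _] | [_ -> _ _]] //.
by case: x x_0 => // z y x_0; rewrite /= (x_0 (last z y)) ?mem_last.
Qed.

Lemma sumn_map_add (T : Type) k (P : pred T) (s : seq T) :
  sumn [seq k + P x | x <- s] = k * size s + count P s.
Proof. by elim: s => [|x s IH] /=; rewrite ?muln0 // IH mulnS; lia. Qed.

Fixpoint avoidersB n : seq (seq nat) :=
  if n is n'.+1 then [seq rcons x v | x <- avoidersB n', v <- childrenB x] else [:: [:: 0]].

Lemma avoidersBS n : avoidersB n.+1 = [seq rcons x v | x <- avoidersB n, v <- childrenB x].
Proof. by []. Qed.

Lemma avoidersB_mem n x : x \in avoidersB n <-> size x = n.+1 /\ avoider QB x.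
Proof.
elim: n x => [|n IH] x.
  rewrite inE; split=> [/eqP -> | [sx /avoider_head [y ey]]]; first exact: conj _ (avoider0 _).
  by move: sx; rewrite ey; case: (y).
split=> [/allpairsPdep [x' [v [/IH [sx ax] vc ->]]] | []].
  by rewrite size_rcons sx; split=> //; apply/avoiderB_rcons.
case/lastP: x => [|x v] //; rewrite size_rcons => -[sx] axv.
have x0 : x != [::] by rewrite -size_eq0 sx.
have [ax _] := (avoider_rcons QB v x0).1 axv.
by apply/allpairsPdep; exists x, v; split=> //; [apply/IH | apply/(avoiderB_rcons v ax)].
Qed.

Lemma avoidersB_uniq n : uniq (avoidersB n).
Proof.
elim: n => [|n IH] //.
rewrite avoidersBS; apply: allpairs_uniq_dep => // [x /avoidersB_mem [_ ax] | ].
  rewrite /childrenB; case: (last 0 x) (avoiderB_last ax) => [|l] //= la.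
  by rewrite /= !inE andbT eqSS gtn_eqF.
by move=> [x v] [x' v'] _ _ /= /rcons_inj [-> ->].
Qed.

Lemma avoidersB_size n : size (avoidersB n) = fib (2 * n).+1.
Proof.
have [] // := @fib_odd_even (fun n => size (avoidersB n))
  (fun n => count (fun x => last 0 x != 0) (avoidersB n)) erefl erefl _ _ n.
- move=> m; rewrite avoidersBS size_allpairs_dep.
  rewrite (@eq_map _ _ _ (fun x => 2 + (last 0 x != 0))); first by rewrite sumn_map_add; lia.
  by move=> x; rewrite /childrenB; case: (last 0 x).
- move=> m; rewrite avoidersBS count_flatten -map_comp.
  rewrite (@eq_map _ _ _ (fun x => 1 + (last 0 x != 0))); first by rewrite sumn_map_add; lia.
  move=> x /=; rewrite count_map /childrenB /= !last_rcons.
  by case: (last 0 x) => //= l; rewrite last_rcons.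
Qed.

Lemma count_avoidersP (P : seq (seq nat)) (Q : nat -> nat -> nat -> nat -> bool) n s :
  (forall t, red t \in P <-> exists a b c d, t = [:: a; b; c; d] /\ Q a b c d) ->
  uniq s -> (forall x, x \in s <-> size x = n /\ avoider Q x) ->
  count_avoiders P n (size s).
Proof.
move=> PQ us sP; exists s; do 2!split=> //; move=> x; rewrite sP.
split=> [[sx [ax nQ]] | [sx ax avP]]; first by split=> //; apply/(avoids_allE _ PQ).
by do !split=> //; apply/(avoids_allE _ PQ).
Qed.

Theorem theorem3p1 (n : nat) : 1 <= n ->
  count_avoiders [:: [:: 0; 1; 0; 1]; [:: 0; 1; 0; 2]] n (fib (2 * n - 1)) /\
  count_avoiders [:: [:: 0; 1; 0; 1]; [:: 0; 1; 2; 1]] n (fib (2 * n - 1)).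
Proof.
case: n => [|m] // _; have -> : 2 * m.+1 - 1 = (2 * m).+1 by lia.
split; [rewrite -(avoidersA_size m) | rewrite -(avoidersB_size m)];
  apply: count_avoidersP.
- exact: red_patternsA.
- by case: (avoidersA_uniq m).
- exact: (avoidersA_mem m).1.
- exact: red_patternsB.
- exact: avoidersB_uniq.
- exact: avoidersB_mem.
Qed.
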